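(* Let $p$ be a prime with $p\equiv 1\pmod 4$, and let $$D_p(2,2)=\det\left[(i^2+2ij+2j^2)^{p-2}\right]_{1\le i,j\le p-1}.$$ Then $$\left(\frac{D_p(2,2)}{p}\right)=\begin{cases}1 & \text{if } p\equiv 1\pmod 8,\\ 0 & \text{if } p\equiv 5\pmod 8.\end{cases}$$
   Context: $\left(\frac{\cdot}{p}\right)$ denotes the Legendre symbol modulo $p$. The determinant is of the $(p-1)\times(p-1)$ integer matrix whose $(i,j)$ entry is $(i^2+2ij+2j^2)^{p-2}$. *)

From HB Require Import structures.
From mathcomp Require Import all_boot all_order all_algebra.
Set Implicit Arguments. Unset Strict Implicit. Unset Printing Implicit Defensive.
Import Order.TTheory GRing.Theory Num.Theory.
Local Open Scope ring_scope.

Definition legendre (a : int) (p : nat) : int :=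
  if (p%:Z %| a)%Z then 0
  else if [exists x : 'I_p, (p%:Z %| (x * x)%:Z - a)%Z] then 1 else -1.

(* D_p(2,2) = det [ (i^2 + 2ij + 2j^2)^(p-2) ]_{1 <= i,j <= p-1}, as an integer.
   Index k : 'I_(p-1) represents k+1. *)
Definition Dp22 (p : nat) : int :=
  \det (\matrix_(i < p.-1, j < p.-1)
          ((i.+1 ^ 2 + 2 * i.+1 * j.+1 + 2 * j.+1 ^ 2) ^ (p - 2))%N%:Z).

From HB Require Import structures.
From mathcomp Require Import all_boot all_algebra all_solvable all_field.
From mathcomp Require Import ring zify.
Set Implicit Arguments. Unset Strict Implicit. Unset Printing Implicit Defensive.
Import GRing.Theory.
Local Open Scope ring_scope.

(* Let F be the prime field of odd characteristic p and t a
   square root of -1 in F (it exists since p = 1 mod 4).  Then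
   1 + 2u + 2u^2 = (1 + alpha u)(1 + beta u) with alpha = 1 + t, beta = 1 - t,
   and, by partial fractions together with the closed forms of the geometric
   sums over a full period of F^*, the function u |-> (1 + 2u + 2u^2)^(p-2) on
   F^* equals the polynomial sum_(k < p-1) coef k u^k.  Hence the matrix
   ((x_i^2 + 2 x_i x_j + 2 x_j^2)^(p-2)) over the distinct units x_i factors as
   diag(x_i^(2(p-2))) (x_i^-k) diag(coef k) (x_j^k)^T, and the orthogonality
   of characters of F^* gives det = (prod x_i^(p-2))^2 * prod_k coef k.
   Finally coef k = (-1)^k alpha^k / 2 * (a term depending on k mod 4): for
   p = 5 (mod 8) the middle coefficient is a multiple of p, so D_p(2,2) = 0
   mod p; for p = 1 (mod 8) the symmetry coef k = 2^(k+1) coef (p-3-k) and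
   2 = (alpha/s)^2 (s^2 = t) pair the coefficients into a nonzero square. *)

Lemma odd_mod2 n : (n %% 2 = 1)%N -> odd n.
Proof. by rewrite modn2; case: (odd n). Qed.

Lemma prod_pairs (R : comNzRingType) (f : nat -> R) n :
  \prod_(0 <= k < n.*2.+2) f k =
  f n * f n.*2.+1 * \prod_(0 <= k < n) (f k * f (n.*2 - k)%N).
Proof.
have upper_half : \prod_(n.+1 <= k < n.*2.+1) f k = \prod_(0 <= k < n) f (n.*2 - k)%N.
  rewrite -{1}[n.+1]add0n big_addn.
  have -> : (n.*2.+1 - n.+1 = n)%N by lia.
  by rewrite big_nat_rev /=; apply: eq_big_nat => i /andP [_ lt_in]; congr f; lia.
rewrite big_nat_recr //= (@big_cat_nat _ _ _ n) //=; last by lia.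
by rewrite (@big_ltn _ _ _ n) ?upper_half ?big_split /=; [ring | lia].
Qed.

(* F is a prime field of odd characteristic p: every element is fixed by
   the Frobenius map x |-> x^p. *)
Section PrimeField.
Variables (F : fieldType) (p : nat).
Hypothesis pcharF : p \in [pchar F].
Hypothesis p_odd : odd p.
Hypothesis frobenius_id : forall x : F, x ^+ p = x.

Lemma p_gt2 : (2 < p)%N.
Proof.
have p_gt1 := prime_gt1 (pcharf_prime pcharF).
by case: p p_odd p_gt1 => [|[|[|]]].
Qed.

Let p_gt1 : (1 < p)%N := ltnW p_gt2.
Let p_gt0 : (0 < p)%N := ltnW p_gt1.

Lemma natr_p : p%:R = 0 :> F.
Proof. exact: pcharf0 pcharF. Qed.

(* The only multiple of p in ]0, 2p[ is p itself. *)
Lemma natr_neq0 m : (0 < m < p.*2)%N -> m != p -> m%:R != 0 :> F.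
Proof.
move=> m_bounds m_neq_p; rewrite -(dvdn_pcharf pcharF).
apply/negP => /dvdnP [[|[|c]] m_eq]; move: m_bounds m_neq_p; rewrite m_eq; lia.
Qed.

Lemma two_neq0 : 2 != 0 :> F.
Proof. by apply: natr_neq0; have := p_gt2; lia. Qed.

Lemma natr_predp : (p.-1)%:R = -1 :> F.
Proof. by apply/eqP; rewrite -subr_eq0 opprK natr1 prednK ?natr_p. Qed.

Lemma fermat (x : F) : x != 0 -> x ^+ p.-1 = 1.
Proof. by move=> x_nz; apply: (mulIf x_nz); rewrite mul1r -exprSr prednK. Qed.

Lemma expr_sub_pred (x : F) j : x != 0 -> (j <= p.-1)%N ->
  x ^+ (p.-1 - j) = (x ^+ j)^-1.
Proof.
move=> x_nz le_jp; apply: (mulIf (expf_neq0 j x_nz)).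
by rewrite -exprD subnK // fermat // mulVf // expf_neq0.
Qed.

Lemma expr_inv (x : F) : x != 0 -> x ^+ (p - 2) = x^-1.
Proof.
move=> x_nz; rewrite -(expr_sub_pred x_nz (j := 1)) ?expr1 //; last first.
  by rewrite -ltnS prednK.
by congr (_ ^+ _); lia.
Qed.

(* The geometric sum over a full period of F^*: it is the indicator of w = 1,
   up to sign, since w^(p-1) = 1 for every w != 0. *)
Definition geom (w : F) : F := \sum_(k < p.-1) w ^+ k.

Lemma geom_eq (w : F) : w != 0 -> geom w = - (w == 1)%:R.
Proof.
move=> w_nz; have [->|w_neq1] := eqVneq w 1.
  rewrite /geom (eq_bigr (fun _ => 1)) => [|i _]; last by rewrite expr1n.
  by rewrite sumr_const card_ord natr_predp.
have := subrX1 w p.-1; rewrite fermat // subrr => /esym/eqP.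
by rewrite mulf_eq0 subr_eq0 (negbTE w_neq1) => /eqP; rewrite /geom => ->; rewrite oppr0.
Qed.

Definition dgeom (w : F) : F := \sum_(k < p.-1) (k.+1)%:R * w ^+ k.

Lemma dgeom_closed (w : F) n :
  (1 - w) ^+ 2 * \sum_(k < n) (k.+1)%:R * w ^+ k
  = 1 - (n.+1)%:R * w ^+ n + n%:R * w ^+ n.+1.
Proof.
elim: n => [|n IHn]; first by rewrite big_ord0 mulr0 expr0 !mul1r mul0r addr0 subrr.
by rewrite big_ord_recr /= mulrDr IHn -!natr1 !exprS; ring.
Qed.

Lemma dgeom_eq (w : F) : dgeom w = (1 - w) ^+ (p - 2).
Proof.
have [->|w_neq1] := eqVneq w 1.
  rewrite subrr expr0n /= subn_eq0 leqNgt p_gt2 /dgeom.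
  rewrite (eq_bigr (fun k : 'I_p.-1 => (k.+1)%:R)) => [|i _]; last by rewrite expr1n mulr1.
  rewrite -natr_sum; have -> : (\sum_(k < p.-1) k.+1 = 'C(p, 2))%N.
    by rewrite -bin2_sum big_mkord -(prednK p_gt0) big_ord_recl.
  by rewrite bin2odd // natrM natr_p mul0r.
have nz : 1 - w != 0 by rewrite subr_eq0 eq_sym.
have := dgeom_closed w p.-1; rewrite prednK // natr_p mul0r subr0 natr_predp mulN1r.
rewrite frobenius_id -/(dgeom w) => closed_form.
apply: (mulfI (expf_neq0 2 nz)); rewrite closed_form -exprD addnC subnK.
  by rewrite frobenius_id.
exact: ltnW p_gt2.
Qed.

Section SquareRootOfMinusOne.
Variable t : F.
Hypothesis t_sq : t ^+ 2 = -1.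

(* With t^2 = -1 the quadratic form factors: 1 + 2u + 2u^2 = (1 + alpha u)(1 + beta u). *)
Definition alpha : F := 1 + t.
Definition beta : F := 1 - t.

Lemma t_neq0 : t != 0.
Proof.
apply/eqP => t0; move: t_sq; rewrite t0 expr0n /= => /eqP.
by rewrite eq_sym oppr_eq0 oner_eq0.
Qed.

Lemma alpha_mul_beta : alpha * beta = 2.
Proof. by rewrite /alpha /beta; ring: t_sq. Qed.

Lemma alpha_neq0 : alpha != 0.
Proof. by apply: contra two_neq0 => /eqP a0; rewrite -alpha_mul_beta a0 mul0r. Qed.

Lemma beta_neq0 : beta != 0.
Proof. by apply: contra two_neq0 => /eqP b0; rewrite -alpha_mul_beta b0 mulr0. Qed.

Lemma alpha_sub_beta_neq0 : alpha - beta != 0.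
Proof.
have -> : alpha - beta = 2 * t by rewrite /alpha /beta; ring.
by rewrite mulf_neq0 ?two_neq0 ?t_neq0.
Qed.

Lemma quad_factor (u : F) : 1 + 2 * u + 2 * u ^+ 2 = (1 + alpha * u) * (1 + beta * u).
Proof. by rewrite /alpha /beta; ring: t_sq. Qed.

(* Partial fractions for the (p-2)-th power, which is the inverse away from 0.
   The affine relation holds for X = 1 + alpha u, Y = 1 + beta u; it forbids
   X = Y = 0, and when one factor vanishes the correction term compensates. *)
Lemma partial_fraction (X Y : F) : alpha * Y - beta * X = alpha - beta ->
  (X * Y) ^+ (p - 2) = (alpha * X ^+ (p - 2) - beta * Y ^+ (p - 2)) / (alpha - beta)
                       - ((X == 0)%:R + (Y == 0)%:R) / 2.
Proof.
move=> rel; have zero_pow : (0 : F) ^+ (p - 2) = 0.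
  by rewrite expr0n subn_eq0 leqNgt p_gt2.
have ab_nz := alpha_sub_beta_neq0.
have [X0|X_nz] := eqVneq X 0.
  have Y_eq : Y = (alpha - beta) / alpha.
    by rewrite -rel X0 mulr0 subr0 mulrC mulKf ?alpha_neq0.
  have Y_nz : Y != 0 by rewrite Y_eq mulf_neq0 ?invr_eq0 ?alpha_neq0.
  rewrite X0 mul0r zero_pow mulr0 (negbTE Y_nz) expr_inv // Y_eq.
  rewrite mulr1n mulr0n addr0 /alpha /beta; field: t_sq.
  by rewrite two_neq0 -/alpha -/beta ab_nz alpha_neq0.
have [Y0|Y_nz] := eqVneq Y 0.
  have X_eq : X = (beta - alpha) / beta.
    by rewrite -opprB -rel Y0 mulr0 sub0r opprK mulrC mulKf ?beta_neq0.
  rewrite Y0 mulr0 zero_pow mulr0 expr_inv // X_eq.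
  rewrite mulr1n mulr0n add0r /alpha /beta; field: t_sq.
  rewrite -/alpha -/beta ab_nz beta_neq0 -opprB oppr_eq0 ab_nz !andbT.
  exact: two_neq0.
have -> : alpha * X ^+ (p - 2) - beta * Y ^+ (p - 2) = (alpha * Y - beta * X) / (X * Y).
  by rewrite !expr_inv //; field; rewrite X_nz Y_nz.
rewrite rel mulr0n addr0 mul0r subr0.
by rewrite expr_inv ?mulf_neq0 //; field; rewrite ab_nz X_nz Y_nz.
Qed.

Definition coef (k : nat) : F :=
  (-1) ^+ k * ((k.+1)%:R * (alpha ^+ k.+1 - beta ^+ k.+1) / (alpha - beta)
               + (alpha ^+ k + beta ^+ k) / 2).

Lemma coef_sum (u : F) : \sum_(k < p.-1) coef k * u ^+ k =
  (alpha * dgeom (- (alpha * u)) - beta * dgeom (- (beta * u))) / (alpha - beta)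
  + (geom (- (alpha * u)) + geom (- (beta * u))) / 2.
Proof.
rewrite /dgeom /geom !mulr_sumr -sumrB -big_split /= !mulr_suml -big_split /=.
apply: eq_bigr => k _; rewrite /coef (exprNn (alpha * u)) (exprNn (beta * u)) !exprMn !exprS.
by field; rewrite two_neq0 alpha_sub_beta_neq0.
Qed.

Lemma quad_pow_expansion (u : F) : u != 0 ->
  (1 + 2 * u + 2 * u ^+ 2) ^+ (p - 2) = \sum_(k < p.-1) coef k * u ^+ k.
Proof.
move=> u_nz; have neg_eq1 (x : F) : (- x == 1) = (1 + x == 0) by rewrite addr_eq0 eq_sym.
rewrite coef_sum !dgeom_eq !geom_eq ?oppr_eq0 ?mulf_neq0 ?alpha_neq0 ?beta_neq0 //.
rewrite !opprK !neg_eq1 quad_factor partial_fraction; first by ring.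
by rewrite /alpha /beta; ring.
Qed.

Definition quad_form (x y : F) : F := x ^+ 2 + 2 * x * y + 2 * y ^+ 2.

Lemma quad_form_pow (x y : F) : x != 0 -> y != 0 ->
  quad_form x y ^+ (p - 2) = x ^+ (2 * (p - 2)) * \sum_(k < p.-1) coef k * (y / x) ^+ k.
Proof.
move=> x_nz y_nz; rewrite -quad_pow_expansion ?mulf_neq0 ?invr_eq0 // exprM -exprMn.
by congr (_ ^+ _); rewrite /quad_form; field.
Qed.

Section Determinant.
Variable xs : 'I_p.-1 -> F.
Hypothesis xs_neq0 : forall i, xs i != 0.
Hypothesis xs_inj : injective xs.

(* Orthogonality of characters of the cyclic group F^*: the matrices
   (x_i^-k) and (x_j^k) are inverse to each other up to the sign -1. *)
Lemma power_matrices_orthogonal :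
  (\matrix_(i, k < p.-1) (xs i)^-1 ^+ k) *m (\matrix_(j, k < p.-1) xs j ^+ k)^T
  = (-1)%:M.
Proof.
apply/matrixP => i j; rewrite !mxE.
rewrite (eq_bigr (fun k : 'I_p.-1 => (xs j / xs i) ^+ k)); last first.
  by move=> k _; rewrite !mxE exprMn mulrC.
rewrite -/(geom _) geom_eq ?mulf_neq0 ?invr_eq0 //.
have -> : (xs j / xs i == 1) = (i == j).
  by apply/eqP/eqP => [/divr1_eq/xs_inj ->|->] //; exact: divff.
by case: (i == j); rewrite ?mulr1n ?mulr0n ?oppr0.
Qed.

(* The matrix of the theorem factors as diag(x_i^(2(p-2))) (x_i^-k) diag(coef k)
   (x_j^k)^T, whence its determinant. *)
Lemma det_quad_form_matrix :
  \det (\matrix_(i, j) quad_form (xs i) (xs j) ^+ (p - 2))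
  = (\prod_i xs i ^+ (p - 2)) ^+ 2 * \prod_(k < p.-1) coef k.
Proof.
pose W := \matrix_(i, k < p.-1) (xs i)^-1 ^+ k.
pose Y := \matrix_(j, k < p.-1) xs j ^+ k.
pose d := \row_(i < p.-1) xs i ^+ (2 * (p - 2)).
pose E := \row_(k < p.-1) coef k.
have -> : \matrix_(i, j) quad_form (xs i) (xs j) ^+ (p - 2)
          = diag_mx d *m (W *m diag_mx E) *m Y^T.
  apply/matrixP => i j; rewrite mul_mx_diag mul_diag_mx !mxE quad_form_pow // mulr_sumr.
  by apply: eq_bigr => k _; rewrite !mxE exprMn exprVn; ring.
have detWY : \det W * \det Y = 1.
  rewrite -(det_tr Y) -det_mulmx power_matrices_orthogonal det_scalar -signr_odd.
  by move: p_odd; rewrite -(prednK p_gt0) /= => /negbTE ->.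
rewrite !det_mulmx !det_diag det_tr -mulrA mulrAC detWY mul1r.
congr (_ * _); last by apply: eq_bigr => k _; rewrite mxE.
by rewrite -prodrXl; apply: eq_bigr => i _; rewrite mxE -exprM mulnC.
Qed.

End Determinant.

(* Since beta = -t alpha and (-t)^4 = 1, coef k depends, up to the factor
   (-1)^k alpha^k / 2, only on k mod 4. *)
Definition coef_core (k : nat) : F :=
  match (k %% 4)%N with
  | 0 => 2 * (k.+2)%:R
  | 1 => beta * (2 * k + 3)%:R
  | 2 => - (2 * t * (k.+1)%:R)
  | _ => alpha
  end.

Lemma coef_closed k : coef k = (-1) ^+ k * alpha ^+ k / 2 * coef_core k.
Proof.
have beta_pow : beta ^+ k = (- t) ^+ (k %% 4) * alpha ^+ k.
  have -> : beta = - t * alpha by rewrite /beta /alpha; ring: t_sq.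
  have mt4 : (- t) ^+ 4 = 1 by rewrite (exprM _ 2 2) sqrrN t_sq sqrrN expr1n.
  by rewrite exprMn {1}(divn_eq k 4) exprD mulnC exprM mt4 expr1n mul1r.
rewrite /coef_core /coef !exprS; move: beta_pow (ltn_pmod k (isT : (0 < 4)%N)).
have -> : (2 * k + 3)%:R = 2 * (k.+1)%:R + 1 :> F.
  by rewrite -natr1 natrD natrM -natr1; ring.
rewrite -[(k.+2)%:R]natr1.
case: (k %% 4)%N => [|[|[|[|r]]]] -> // _;
  by rewrite /alpha /beta; field: t_sq; rewrite two_neq0 -/alpha -/beta alpha_sub_beta_neq0.
Qed.

(* Since alpha beta = 2, inverting alpha or beta amounts to halving the other. *)
Lemma alpha_inv : alpha^-1 = beta / 2.
Proof.
by apply: (mulfI alpha_neq0); rewrite mulfV ?alpha_neq0 // mulrA alpha_mul_beta divff ?two_neq0.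
Qed.

Lemma beta_inv : beta^-1 = alpha / 2.
Proof.
apply: (mulfI beta_neq0); rewrite mulfV ?beta_neq0 // mulrA [beta * _]mulrC.
by rewrite alpha_mul_beta divff ?two_neq0.
Qed.

(* The coefficients are symmetric up to a power of 2 under k <-> p - 3 - k;
   this is what pairs them into squares when p = 1 (mod 8). *)
Lemma coef_sym k : (k <= p - 3)%N -> coef k = 2 ^+ k.+1 * coef (p - 3 - k).
Proof.
move=> le_k; set j := (p - 3 - k)%N.
have j1_eq : j.+1 = (p.-1 - k.+1)%N by rewrite /j; lia.
have j_eq : j = (p.-1 - k.+2)%N by rewrite /j; lia.
have sign_j : (-1) ^+ j = (-1) ^+ k :> F.
  by rewrite -signr_odd -[in RHS]signr_odd /j oddB // oddB ?p_gt2 // p_odd.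
have natr_j : (p.-1 - k.+1)%:R = - (k.+2)%:R :> F.
  apply/eqP; rewrite -addr_eq0 -natrD.
  have -> : (p.-1 - k.+1 + k.+2 = p)%N by lia.
  by rewrite natr_p.
have le_k1 : (k.+1 <= p.-1)%N by lia.
have le_k2 : (k.+2 <= p.-1)%N by lia.
rewrite /coef sign_j j1_eq natr_j j_eq !expr_sub_pred ?alpha_neq0 ?beta_neq0 //.
rewrite -!exprVn alpha_inv beta_inv !exprMn !exprVn !exprS.
have pow2_nz : 2 ^+ k != 0 :> F by rewrite expf_neq0 ?two_neq0.
rewrite /alpha /beta; field: t_sq.
by rewrite two_neq0 pow2_nz -/alpha -/beta alpha_sub_beta_neq0.
Qed.

(* For p = 5 (mod 8) the middle coefficient, of index (p-3)/2, contains the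
   factor p and vanishes. *)
Lemma prod_coef_eq0 : (p %% 8 = 5)%N -> \prod_(k < p.-1) coef k = 0.
Proof.
move=> p_mod8; have mid_lt : ((p - 3) %/ 2 < p.-1)%N by lia.
rewrite (bigD1 (Ordinal mid_lt)) //= coef_closed /coef_core.
have -> : (((p - 3) %/ 2) %% 4 = 1)%N by lia.
have -> : (2 * ((p - 3) %/ 2) + 3 = p)%N by lia.
by rewrite natr_p !mulr0 mul0r.
Qed.

(* For p = 1 (mod 8) no coefficient vanishes: the integers occurring in
   coef_core are then not multiples of p. *)
Lemma coef_neq0 k : (p %% 8 = 1)%N -> (k < p.-1)%N -> coef k != 0.
Proof.
move=> p_mod8 lt_kp; rewrite coef_closed !mulf_neq0 ?invr_eq0 ?two_neq0 //.
- by rewrite expf_neq0 // oppr_eq0 oner_eq0.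
- exact: expf_neq0 alpha_neq0.
rewrite /coef_core; case k_mod4: (k %% 4)%N => [|[|[|r]]].
- by rewrite mulf_neq0 ?two_neq0 // natr_neq0; lia.
- by rewrite mulf_neq0 ?beta_neq0 // natr_neq0; lia.
- by rewrite oppr_eq0 !mulf_neq0 ?two_neq0 ?t_neq0 // natr_neq0; lia.
- exact: alpha_neq0.
Qed.

(* The two coefficients left unpaired in prod_coef_square have index 3 mod 4. *)
Lemma coef_3mod4 k : (k %% 4 = 3)%N -> coef k = - alpha ^+ k.+1 / 2.
Proof.
move=> k_mod4; have k_odd : odd k by apply: odd_mod2; lia.
rewrite coef_closed /coef_core k_mod4 -signr_odd k_odd exprS.
by field; rewrite two_neq0.
Qed.

(* For p = 1 (mod 8), with s^2 = t (so that (alpha/s)^2 = 2), pairing k with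
   p - 3 - k via coef_sym writes the product of the coefficients as a square;
   the two unpaired terms are congruent to 3 mod 4 and multiply to a square. *)
Lemma prod_coef_square s : (p %% 8 = 1)%N -> s ^+ 2 = t ->
  exists2 y : F, y != 0 & \prod_(k < p.-1) coef k = y ^+ 2.
Proof.
move=> p_mod8 s_sq; set m := ((p - 3) %/ 2)%N.
have p_pred : p.-1 = m.*2.+2 by rewrite /m; lia.
have two_sq : (alpha / s) ^+ 2 = 2.
  by rewrite expr_div_n s_sq /alpha; field: t_sq; exact: t_neq0.
have [y0 y0_sq] : exists y0, coef m * coef m.*2.+1 = y0 ^+ 2.
  rewrite coef_3mod4 ?coef_3mod4 -?p_pred ?fermat ?alpha_neq0; try by rewrite /m; lia.
  have : (alpha ^+ m.+1 - 1) * (alpha ^+ m.+1 + 1) = 0.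
    have m_pred : (m.+1 * 2 = p.-1)%N by rewrite /m; lia.
    by rewrite -subr_sqr -exprM m_pred fermat ?alpha_neq0 // expr1n subrr.
  move/eqP; rewrite mulf_eq0 subr_eq0 addr_eq0 => /orP [] /eqP ->.
    by exists (1 / 2); field; rewrite two_neq0.
  by exists (t / 2); field: t_sq; rewrite two_neq0.
have prod_eq : \prod_(k < p.-1) coef k
    = (y0 * \prod_(0 <= k < m) ((alpha / s) ^+ k.+1 * coef (m.*2 - k))) ^+ 2.
  rewrite p_pred -(big_mkord xpredT) prod_pairs y0_sq exprMn -prodrXl; congr (_ * _).
  apply: eq_big_nat => k /andP [_ lt_km].
  rewrite coef_sym; last by rewrite /m; lia.
  have -> : (p - 3 - k = m.*2 - k)%N by rewrite /m; lia.
  by rewrite exprMn -exprM mulnC exprM two_sq expr2 mulrA.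
have prod_nz : \prod_(k < p.-1) coef k != 0.
  by apply/prodf_neq0 => k _; exact: coef_neq0.
exists (y0 * \prod_(0 <= k < m) ((alpha / s) ^+ k.+1 * coef (m.*2 - k))) => //.
by apply: contraNneq prod_nz => y_eq0; rewrite prod_eq y_eq0 expr0n.
Qed.

End SquareRootOfMinusOne.

End PrimeField.

Lemma Fp_frobenius p (x : 'F_p) : prime p -> x ^+ p = x.
Proof. by move=> p_prime; rewrite -[in RHS](expf_card x) card_Fp. Qed.

Lemma Fp_prim_root p : prime p -> exists g : 'F_p, (p.-1).-primitive_root g.
Proof.
move=> p_prime; have p_gt1 := prime_gt1 p_prime.
have pred_gt0 : (0 < p.-1)%N by rewrite -ltnS prednK // ltnW.
pose units := enum [pred x : 'F_p | x != 0].
have units_size : size units = p.-1 by rewrite -cardE cardC1 card_Fp.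
have units_roots : all (p.-1).-unity_root units.
  apply/allP => x; rewrite mem_enum inE unity_rootE => x_nz.
  by apply/eqP/(mulIf x_nz); rewrite mul1r -exprSr prednK ?Fp_frobenius // ltnW.
have [g _ g_prim] := hasP (has_prim_root pred_gt0 units_roots (enum_uniq _)
                                          (eq_leq (esym units_size))).
by exists g.
Qed.

Lemma prim_root_half (F : fieldType) n (g : F) :
  n.-primitive_root g -> (2 %| n)%N -> g ^+ (n %/ 2) = -1.
Proof.
move=> g_prim n_even; have n_gt0 := prim_order_gt0 g_prim.
have : (g ^+ (n %/ 2)) ^+ 2 == 1.
  by rewrite -exprM divnK // prim_expr_order.
rewrite sqrf_eq1 -(prim_order_dvd g_prim) => /orP [/dvdn_leq|/eqP //].
by move: n_even n_gt0; rewrite /dvdn; lia.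
Qed.

Lemma legendre_eq0 (a : int) p : prime p -> (a%:~R : 'F_p) = 0 -> legendre a p = 0.
Proof. by move=> p_prime a0; rewrite /legendre (dvdz_pcharf (pchar_Fp p_prime)) a0 eqxx. Qed.

Lemma legendre_eq1 (a : int) p (y : 'F_p) :
  prime p -> y != 0 -> (a%:~R : 'F_p) = y ^+ 2 -> legendre a p = 1.
Proof.
move=> p_prime y_nz a_eq; have pcharFp := pchar_Fp p_prime.
rewrite /legendre (dvdz_pcharf pcharFp) a_eq sqrf_eq0 (negbTE y_nz).
have y_lt : (y < p)%N by rewrite -[X in (_ < X)%N](Fp_cast p_prime) ltn_ord.
have y_natr : (Ordinal y_lt)%:R = y :> 'F_p.
  by apply: val_inj; rewrite /= (val_Fp_nat p_prime) modn_small.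
suff -> : [exists x : 'I_p, (p%:Z %| (x * x)%:Z - a)%Z] by [].
apply/existsP; exists (Ordinal y_lt).
rewrite (dvdz_pcharf pcharFp) rmorphB subr_eq0; apply/eqP.
transitivity (y * y); first by rewrite -[in RHS]y_natr -natrM.
by symmetry; exact: etrans a_eq (expr2 y).
Qed.

Lemma Dp22_Fp p :
  ((Dp22 p)%:~R : 'F_p)
  = \det (\matrix_(i, j < p.-1) quad_form (i.+1)%:R (j.+1)%:R ^+ (p - 2)).
Proof.
rewrite /Dp22 -det_map_mx; congr (\det _).
by apply/matrixP => i j; rewrite !mxE /quad_form -!natrX -!natrM -!natrD -natrX.
Qed.

Lemma Fp_natr_succ_neq0 p : prime p -> forall i : 'I_p.-1, (i.+1)%:R != 0 :> 'F_p.
Proof.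
move=> p_prime i; rewrite -(dvdn_pcharf (pchar_Fp p_prime)).
apply/negP => /dvdn_leq; have := ltn_ord i; have := prime_gt1 p_prime; lia.
Qed.

Lemma Fp_natr_succ_inj p : prime p -> injective (fun i : 'I_p.-1 => (i.+1)%:R : 'F_p).
Proof.
move=> p_prime i j /(congr1 val); rewrite /= !(val_Fp_nat p_prime) !modn_small.
- by move=> [/val_inj].
- by have := ltn_ord j; have := prime_gt1 p_prime; lia.
- by have := ltn_ord i; have := prime_gt1 p_prime; lia.
Qed.

Theorem theorem1p2 (p : nat) (hp : prime p) (h4 : (p %% 4 = 1)%N) :
  legendre (Dp22 p) p = (if (p %% 8 == 1)%N then 1 else 0).
Proof.
have p_odd : odd p by apply: odd_mod2; lia.
have pcharFp := pchar_Fp hp.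
have frob (x : 'F_p) : x ^+ p = x := Fp_frobenius x hp.
have [g g_prim] := Fp_prim_root hp.
have t_sq : (g ^+ (p.-1 %/ 4)) ^+ 2 = -1.
  by rewrite -exprM -(prim_root_half g_prim); [congr (_ ^+ _) | ]; lia.
have det_eq := Dp22_Fp p.
rewrite (det_quad_form_matrix pcharFp p_odd frob t_sq (Fp_natr_succ_neq0 hp)
           (Fp_natr_succ_inj hp)) in det_eq.
have [p_mod8|p_mod8] : (p %% 8 = 1)%N \/ (p %% 8 = 5)%N by lia.
all: rewrite p_mod8 /=.
- have s_sq : (g ^+ (p.-1 %/ 8)) ^+ 2 = g ^+ (p.-1 %/ 4).
    by rewrite -exprM; congr (_ ^+ _); lia.
  have [y y_nz prod_sq] := prod_coef_square pcharFp p_odd frob t_sq p_mod8 s_sq.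
  pose x := \prod_(i < p.-1) ((i.+1)%:R : 'F_p) ^+ (p - 2).
  apply: (legendre_eq1 (y := x * y) hp); last by rewrite det_eq prod_sq exprMn.
  rewrite mulf_neq0 //; apply/prodf_neq0 => i _.
  by rewrite expf_neq0 // Fp_natr_succ_neq0.
- apply: legendre_eq0 hp _.
  by rewrite det_eq (prod_coef_eq0 pcharFp p_odd t_sq p_mod8) mulr0.
Qed.
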